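(* Let $0<H<1$, let $B_H$ be a fractional Brownian motion on $[0,1]$ with Hurst parameter $H$, and let $\|\cdot\|$ be a norm on the H\''older space $C_0^\gamma[0,1]$ for some $0<\gamma<H$ such that there are constants $\theta,C_1,C_2>0$ with \[ -C_1\varepsilon^{-\theta}\le \log \mathbb{P}\big[\|B_H\|\le \varepsilon\big]\le -C_2\varepsilon^{-\theta},\qquad \varepsilon\in(0,1]. \] Let $\eta_k(H)=\mathbb{E}\big[\|B_H\|^{-k}\big]$. Then $\eta_k(H)=k^{k/\theta+o(k)}$ as $k\uparrow\infty$. *)

From HB Require Import structures.
From mathcomp Require Import all_boot all_order all_algebra.
From mathcomp Require Import all_classical all_reals all_analysis.
Set Implicit Arguments. Unset Strict Implicit. Unset Printing Implicit Defensive.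
Import Order.TTheory GRing.Theory Num.Theory.
Import numFieldNormedType.Exports.
Local Open Scope classical_set_scope.
Local Open Scope ring_scope.

Section defs.
Context {R : realType}.

Definition fbm_cov (H s t : R) : R :=
  (`|s| `^ (2 * H) + `|t| `^ (2 * H) - `|t - s| `^ (2 * H)) / 2.

Definition centered_gaussian_law {d} {T : measurableType d}
    (P : probability T R) (Y : T -> R) (v : R) : Prop :=
  measurable_fun setT Y /\
  forall A : set R, measurable A ->
    P (Y @^-1` A) = (if v == 0 then \d_(0 : R) A
                     else normal_prob 0 (Num.sqrt v) A).

(** Paths are functions R -> R of which only the restriction to [0,1]
    matters. *)
Definition is_fBM {d} {T : measurableType d} (P : probability T R)
    (H : R) (B : T -> R -> R) : Prop :=
  forall (n : nat) (t : 'I_n -> R) (a : 'I_n -> R),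
    (forall i, 0 <= t i <= 1) ->
    centered_gaussian_law P (fun w => \sum_(i < n) a i * B w (t i))
      (\sum_(i < n) \sum_(j < n) a i * a j * fbm_cov H (t i) (t j)).

Definition hoelder0 (gamma : R) (f : R -> R) : Prop :=
  f 0 = 0 /\
  exists C : R, forall s t : R, 0 <= s <= 1 -> 0 <= t <= 1 ->
    `|f t - f s| <= C * `|t - s| `^ gamma.

(** N is a norm on C_0^gamma[0,1] (functions are identified when they
    agree on [0,1]). *)
Definition is_norm_on_hoelder0 (gamma : R) (N : (R -> R) -> R) : Prop :=
  [/\ (forall f g, hoelder0 gamma f -> hoelder0 gamma g ->
         (forall t, 0 <= t <= 1 -> f t = g t) -> N f = N g),
      (forall f, hoelder0 gamma f -> 0 <= N f),
      (forall f, hoelder0 gamma f -> N f = 0 -> forall t, 0 <= t <= 1 -> f t = 0),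
      (forall (c : R) f, hoelder0 gamma f -> N (fun t => c * f t) = `|c| * N f) &
      (forall f g, hoelder0 gamma f -> hoelder0 gamma g ->
         N (fun t => f t + g t) <= N f + N g)].

Definition eta_moment {d} {T : measurableType d} (P : probability T R)
    (N : (R -> R) -> R) (B : T -> R -> R) (k : nat) : \bar R :=
  (\int[P]_w ((N (B w)) ^- k)%:E)%E.

End defs.

From HB Require Import structures.
From mathcomp Require Import all_boot all_order all_algebra.
From mathcomp Require Import all_classical all_reals all_analysis.
From mathcomp Require Import ring lra measurable_realfun.
Import Order.TTheory GRing.Theory Num.Theory.
Import numFieldNormedType.Exports.
Local Open Scope classical_set_scope.
Local Open Scope ring_scope.

(* Write X = ||B_H|| and F e = P [X <= e]; only the small-ball bounds on F are used.
   Lower bound: X^-k >= k^(k/theta) on {X <= k^(-1/theta)}, an event of probability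
   at least e^(-C1 k).
   Upper bound: cutting {X <= 1} into the layers e^(-j-1) < X <= e^(-j),
     E[X^-k] <= 1 + sum_j e^((j+1)k) F (e^-j) <= 1 + sum_j exp (k + m s_j - C2 e^s_j)
   with m = k/theta and s_j = theta j.  Split C2 e^s into two halves c e^s: the
   Fenchel-Young inequality m s - c e^s <= m ln (m/c) - m bounds the first one by
   (k/theta) ln k + O(k), and c e^s >= c (1 + s) turns the second into the geometric
   factor e^(-c theta j).  Hence ln E[X^-k] = (k/theta) ln k + O(k), which is the
   claim with r k = O(k / ln k). *)

Section real_estimates.
Context {R : realType}.

Lemma mul_sub_expR_le (m c s : R) : 0 < m -> 0 < c ->
  m * s - c * expR s <= m * ln (m / c) - m.
Proof.
move=> m0 c0; set u := s - ln (m / c).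
have ecs : c * expR s = m * expR u.
  rewrite /u expRB lnK ?posrE ?divr_gt0 //.
  by field; rewrite !gt_eqF.
have := ler_wpM2l (ltW m0) (expR_ge1Dx u).
rewrite ecs /u; lra.
Qed.

Lemma cvg_div_ln_div0 (K : R) (g : nat -> R) :
  (\forall k \near \oo, `|g k| <= K * k%:R) ->
  (fun k : nat => g k / ln (k%:R : R) / k%:R) @ \oo --> 0.
Proof.
move=> gK; apply/cvgrPdist_le => e e0.
near=> k.
have k1 : (1 : R) < k%:R by near: k; exact: nbhs_infty_gtr.
have lnk : K / e < ln (k%:R : R).
  rewrite -ltr_expR lnK ?posrE ?(lt_trans ltr01) //.
  by near: k; exact: nbhs_infty_gtr.
have k0 : (0 : R) < k%:R by exact: lt_trans k1.
have lk0 : 0 < ln (k%:R : R) by rewrite ln_gt0.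
rewrite sub0r normrN -mulrA -invfM normrM normfV [`|_ * _|]gtr0_norm ?mulr_gt0 //.
have gk : `|g k| <= K * k%:R by near: k; exact: gK.
have Kle : K <= e * ln (k%:R : R) by rewrite ltW // mulrC -ltr_pdivrMr.
by rewrite ler_pdivrMr ?mulr_gt0 // (le_trans gk) // mulrA ler_wpM2r // ltW.
Unshelve. all: by end_near.
Qed.

Lemma layer_exponent_le (theta c x t : R) :
  0 < theta -> 0 < c -> 0 < x ->
  x + x / theta * t - 2 * c * expR t <=
  x / theta * ln x + x * (1 + `|ln (theta * c)| / theta) - c * t.
Proof.
move=> th0 c0 x0; set m := x / theta.
have m0 : 0 < m by rewrite divr_gt0.
have conj := @mul_sub_expR_le m c t m0 c0.
have lin : c * (1 + t) <= c * expR t by rewrite ler_pM2l // expR_ge1Dx.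
have lnmc : m * ln (m / c) <= m * ln x + x * (`|ln (theta * c)| / theta).
  have -> : x * (`|ln (theta * c)| / theta) = m * `|ln (theta * c)| by rewrite /m; ring.
  have -> : m / c = x / (theta * c) by rewrite /m -mulrA -invfM.
  rewrite ln_div ?posrE ?mulr_gt0 // mulrBr lerD2l -mulrN ler_pM2l //.
  by rewrite -normrN ler_norm.
have : 0 <= m by exact: ltW.
lra.
Qed.

Lemma invXn_le_layer (x : R) (k : nat) : 0 < x <= 1 ->
  exists j : nat, x <= expR (- j%:R) /\ x ^- k <= expR (j.+1%:R * k%:R).
Proof.
case/andP => x0 x1; set t := - ln x.
have t0 : 0 <= t by rewrite oppr_ge0 ln_le0.
have /andP[jt tj] := truncn_itv t0.
exists (Num.truncn t); split.
  by rewrite -(lnK x0) ler_expR lerNr.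
rewrite -(lnK x0) -expRM_natl -expRN ler_expR -mulrN -/t mulrC.
by apply: ler_wpM2r => //; exact: ltW.
Qed.

Lemma nneseries_geometric_le (a q : R) : 0 <= a -> 0 < q < 1 ->
  (\sum_(j <oo) (a * q ^+ j)%:E <= (a / (1 - q))%:E)%E.
Proof.
move=> a0 /andP[q0 q1]; apply: lime_le.
  by apply: is_cvg_nneseries => n _ _; rewrite lee_fin mulr_ge0 // exprn_ge0 // ltW.
apply: nearW => n; rewrite sumEFin lee_fin.
by have := @geometric_le_lim R n a q a0 q0; rewrite gtr0_norm //; exact.
Qed.

End real_estimates.

Section inverse_moments.
Context d (T : measurableType d) (R : realType) (P : probability T R).
Variable X : T -> R.
Hypotheses (mX : measurable_fun setT X) (X0 : forall w, 0 <= X w).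

Lemma measurable_sublevel (e : R) : measurable [set w | X w <= e].
Proof.
have := mX measurableT _ (measurable_itv `]-oo, e]); rewrite setTI.
by congr measurable; apply/seteqP; split => w /=; rewrite in_itv.
Qed.

Lemma fine_sublevel_le (a b : R) : a <= b ->
  fine (P [set w | X w <= a]) <= fine (P [set w | X w <= b]).
Proof.
move=> ab; apply: fine_le; try exact: fin_num_measure (measurable_sublevel _).
by apply: le_measure; rewrite ?inE; try exact: measurable_sublevel; move=> w /= /le_trans; apply.
Qed.

Lemma measurable_invXn (k : nat) : measurable_fun setT (fun w => X w ^- k).
Proof.
have -> : (fun w => X w ^- k) = (fun x : R => x `^ (- k%:R)) \o X.
  by apply/funext => w /=; rewrite powR_invn.
exact: measurableT_comp (@measurable_powR R _) mX.
Qed.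

Lemma integral_scaled_indic (c : R) (A : set T) : 0 <= c -> measurable A ->
  (\int[P]_w (c * \1_A w)%:E = (c * fine (P A))%:E)%E.
Proof.
move=> c0 mA.
rewrite (_ : (fun w => _) = (fun w => c%:E * (\1_A w)%:E)%E); last first.
  by apply/funext => w; rewrite EFinM.
rewrite (ge0_integralZl_EFin P measurableT) //.
- by rewrite integral_indic // setIT EFinM fineK ?fin_num_measure.
- by apply/measurable_EFinP; exact: measurable_indic.
Qed.

(* The null-set hypothesis is needed because [0 ^- k = 0]. *)
Lemma integral_invXn_ge (k : nat) (u : R) : 0 < u ->
  P [set w | X w <= 0] = 0%E ->
  ((u ^- k * fine (P [set w | X w <= u]))%:E <= \int[P]_w (X w ^- k)%:E)%E.
Proof.
move=> u0 P0.
set A := [set w | X w <= u] `\` [set w | X w <= 0].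
have mA : measurable A by apply: measurableD; exact: measurable_sublevel.
have PA : P A = P [set w | X w <= u].
  rewrite [RHS](measureDI P (measurable_sublevel u) (measurable_sublevel 0)) -/A.
  rewrite [X in (_ + X)%E](subset_measure0 _ _ (@subIsetr _ _ _) P0) ?adde0 //.
  - by apply: measurableI; exact: measurable_sublevel.
  - exact: measurable_sublevel.
have uk0 : 0 <= u ^- k by rewrite invr_ge0 exprn_ge0 // ltW.
rewrite -PA -integral_scaled_indic //.
apply: ge0_le_integral => //.
- by move=> w _; rewrite lee_fin mulr_ge0.
- by apply/measurable_EFinP; apply: measurable_funM => //; exact: measurable_indic.
- by apply/measurable_EFinP; exact: measurable_invXn.
move=> w _; rewrite lee_fin indicE.
have [/set_mem [Xu /negP]|_] := boolP (w \in A); last by rewrite mulr0 invr_ge0 exprn_ge0.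
rewrite -ltNge mulr1 => Xw0.
rewrite lef_pV2 ?posrE ?exprn_gt0 //.
by apply: lerXn2r => //; rewrite nnegrE ?X0 ?ltW.
Qed.

Lemma integral_invXn_le_layers (k : nat) :
  (\int[P]_w (X w ^- k)%:E <= 1 + \sum_(j <oo)
     (expR (j.+1%:R * k%:R) * fine (P [set w | X w <= expR (- j%:R)]))%:E)%E.
Proof.
pose G (j : nat) (w : T) :=
  ((expR (j.+1%:R * k%:R) : R) * \1_[set w | X w <= expR (- j%:R)] w)%:E.
have G0 j w : (0 <= G j w)%E by rewrite lee_fin mulr_ge0 ?expR_ge0.
have mG j : measurable_fun setT (G j).
  apply/measurable_EFinP; apply: measurable_funM => //.
  exact/measurable_indic/measurable_sublevel.
have sumG0 w : (0 <= \sum_(j <oo) G j w)%E by apply: nneseries_ge0.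
have pointwise w : ((X w ^- k)%:E <= 1 + \sum_(j <oo) G j w)%E.
  have [/(@invXn_le_layer _ _ k) [j [Xj Xk]]|Xw] := boolP (0 < X w <= 1); last first.
    apply: (le_trans _ (leeDl 1%E (sumG0 w))); rewrite lee_fin.
    move: Xw; rewrite negb_and -leNgt -ltNge; case/orP => [Xw0 | Xw1].
      have -> : X w = 0 by apply/eqP; rewrite eq_le Xw0 X0.
      by rewrite expr0n; case: (k == 0%N); rewrite ?invr1 ?invr0.
    by rewrite invf_le1 ?exprn_gt0 ?(lt_trans ltr01) // exprn_ege1 ?ltW.
  apply: (le_trans _ (leeDr _ lee01)); rewrite (nneseriesD1 (n := j)) //.
  apply: (le_trans _ (leeDl _ _)); last by apply: nneseries_ge0.
  by rewrite /G indicE mem_set // mulr1 lee_fin.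
apply: (le_trans (ge0_le_integral P measurableT _ _ _ (fun w _ => pointwise w))).
- by move=> w _; rewrite lee_fin invr_ge0 exprn_ge0.
- by apply/measurable_EFinP; exact: measurable_invXn.
- apply: emeasurable_funD => //; exact: ge0_emeasurable_sum.
rewrite ge0_integralD //; last exact: ge0_emeasurable_sum.
rewrite (integral_cst P measurableT 1) integral_nneseries //.
rewrite [X in (X + _ <= _)%E](_ : _ = 1%E); last by rewrite mul1e; exact: probability_setT.
apply: leeD2l; apply: lee_nneseries => [j _ _|j _]; first exact: integral_ge0.
by rewrite integral_scaled_indic ?expR_ge0 //; exact: measurable_sublevel.
Qed.

Section small_ball.
Variables theta C1 C2 : R.
Hypotheses (theta0 : 0 < theta) (C10 : 0 < C1) (C20 : 0 < C2).
Local Notation F e := (fine (P [set w | X w <= e])).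
Hypothesis small_ball : forall eps : R, 0 < eps <= 1 ->
  - C1 * eps `^ (- theta) <= ln (F eps) /\ ln (F eps) <= - C2 * eps `^ (- theta).

Lemma small_ball_expR (y : R) : 0 <= y ->
  expR (- C1 * expR (theta * y)) <= F (expR (- y)) <= expR (- C2 * expR (theta * y)).
Proof.
move=> y0.
have [lo up] : - C1 * expR (theta * y) <= ln (F (expR (- y))) /\
               ln (F (expR (- y))) <= - C2 * expR (theta * y).
  rewrite (_ : expR (theta * y) = expR (- y) `^ (- theta)); last first.
    by rewrite -expRM mulrNN mulrC.
  by apply: small_ball; rewrite expR_gt0 expR_le1 oppr_le0.
have Fpos : 0 < F (expR (- y)).
  (* [ln 0 = 0], so the upper bound rules out [F = 0]. *)
  rewrite lt_neqAle fine_ge0 ?measure_ge0 // andbT; apply/eqP => F0.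
  move: up; rewrite -F0 ln0 //; have := mulr_gt0 C20 (expR_gt0 (theta * y)); lra.
by rewrite -(lnK Fpos) !ler_expR lo up.
Qed.

Lemma prob_sublevel0 : P [set w | X w <= 0] = 0%E.
Proof.
rewrite -(fineK (fin_num_measure P _ (measurable_sublevel 0))); congr EFin.
set p := F 0; apply/eqP; rewrite eq_le fine_ge0 ?measure_ge0 // andbT leNgt.
(* With C2 theta y = |ln p|: p <= exp (- C2 e^(theta y)) < exp (- |ln p|) <= p. *)
apply/negP => p0; set y := `|ln p| / (C2 * theta).
have y0 : 0 <= y by rewrite divr_ge0 // mulr_ge0 // ltW.
have Ce : C2 * (theta * y) = `|ln p| by rewrite /y mulrA mulrC divfK // gt_eqF ?mulr_gt0.
have /andP[_ up] := small_ball_expR _ y0.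
have pF : p <= F (expR (- y)) by apply: fine_sublevel_le; exact: expR_ge0.
have := le_trans pF up; rewrite -(lnK p0) ler_expR.
have := lerNnormlW (lexx `|ln p|).
have := ler_wpM2l (ltW C20) (expR_ge1Dx (theta * y)).
rewrite mulrDr mulr1 Ce; have := C20; lra.
Qed.

Lemma invXn_moment_ge (k : nat) : (0 < k)%N ->
  ((expR (k%:R / theta * ln k%:R - C1 * k%:R))%:E <= \int[P]_w (X w ^- k)%:E)%E.
Proof.
move=> k0; set y := ln k%:R / theta.
have y0 : 0 <= y by rewrite divr_ge0 ?ln_ge0 ?ler1n ?ltW.
have eky : expR (theta * y) = k%:R by rewrite /y mulrC divfK ?gt_eqF // lnK ?posrE ?ltr0n.
apply: (le_trans _ (integral_invXn_ge _ _ (expR_gt0 (- y)) prob_sublevel0)).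
rewrite lee_fin.
have /andP[lo _] := small_ball_expR _ y0; rewrite eky in lo.
rewrite -expRM_natl -expRN mulrN opprK (_ : _ - _ = k%:R * y + - C1 * k%:R); last first.
  by rewrite /y; ring.
by rewrite expRD ler_wpM2l ?expR_ge0.
Qed.

Lemma layer_term_le (k j : nat) : (0 < k)%N ->
  expR (j.+1%:R * k%:R) * F (expR (- j%:R)) <=
  expR (k%:R / theta * ln k%:R + k%:R * (1 + `|ln (theta * (C2 / 2))| / theta))
  * expR (- (C2 / 2 * theta)) ^+ j.
Proof.
move=> k0; have c0 : 0 < C2 / 2 by rewrite divr_gt0.
have kpos : (0 : R) < k%:R by rewrite ltr0n.
have /andP[_ up] := small_ball_expR _ (ler0n R j).
apply: le_trans (ler_wpM2l (expR_ge0 _) up) _.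
rewrite -expRD -expRM_natl -expRD ler_expR.
have e1 : j.+1%:R * k%:R = k%:R + k%:R / theta * (theta * j%:R).
  by rewrite -natr1; field; rewrite gt_eqF.
have e2 : 2 * (C2 / 2) = C2 by field.
have := @layer_exponent_le _ theta (C2 / 2) k%:R (theta * j%:R) theta0 c0 kpos.
rewrite e1 e2; lra.
Qed.

Lemma invXn_moment_le : exists D : R, forall k : nat, (0 < k)%N ->
  (\int[P]_w (X w ^- k)%:E <= (expR (k%:R / theta * ln k%:R + D * k%:R))%:E)%E.
Proof.
set c := C2 / 2; set q := expR (- (c * theta)); set S := (1 - q)^-1.
set D0 := 1 + `|ln (theta * c)| / theta.
have c0 : 0 < c by rewrite divr_gt0.
have q01 : 0 < q < 1 by rewrite expR_gt0 expR_lt1 oppr_lt0 mulr_gt0.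
have S0 : 0 < S by rewrite invr_gt0 subr_gt0; case/andP: q01.
exists (D0 + ln (1 + S)) => k k0.
set E := expR (k%:R / theta * ln k%:R + k%:R * D0).
apply: (le_trans (integral_invXn_le_layers k)).
have sum_layers : (\sum_(j <oo)
    (expR (j.+1%:R * k%:R) * F (expR (- j%:R)))%:E <= (E / (1 - q))%:E)%E.
  apply: (le_trans _ (@nneseries_geometric_le _ E q (expR_ge0 _) q01)).
  apply: lee_nneseries => [j _ _|j _]; last by rewrite lee_fin layer_term_le.
  by rewrite lee_fin mulr_ge0 ?expR_ge0 ?fine_ge0 ?measure_ge0.
apply: (le_trans (leeD2l _ sum_layers)).
rewrite -EFinD lee_fin -/S.
have k1 : (1 : R) <= k%:R by rewrite ler1n.
have lnS0 : 0 <= ln (1 + S) by rewrite ln_ge0 // lerDl ltW.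
have theta_ge0 : 0 <= theta^-1 by rewrite invr_ge0 ltW.
have D00 : 0 <= D0 by rewrite /D0 addr_ge0 ?ler01 ?mulr_ge0 ?normr_ge0.
have E1 : 1 <= E.
  by rewrite /E -[X in X <= _]expR0 ler_expR addr_ge0 ?mulr_ge0 ?ler0n ?ln_ge0.
rewrite (_ : _ + _ * k%:R = k%:R / theta * ln k%:R + k%:R * D0 + ln (1 + S) * k%:R);
  last by ring.
rewrite expRD -/E; apply: (@le_trans _ _ (E * (1 + S))); first by nra.
rewrite ler_wpM2l ?expR_ge0 // -{1}(lnK (_ : 0 < 1 + S)) ?ler_expR ?ler_peMr //.
by rewrite addr_gt0.
Qed.

Lemma ln_invXn_moment_bound : exists K : R, forall k : nat, (0 < k)%N ->
  exists2 m : R, (\int[P]_w (X w ^- k)%:E)%E = m%:E &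
    0 < m /\ `|ln m - k%:R / theta * ln k%:R| <= K * k%:R.
Proof.
have [D moment_leD] := invXn_moment_le.
exists (C1 + `|D|) => k k0.
have := invXn_moment_ge _ k0; have := moment_leD k k0.
case: (\int[P]_w _)%E => [m| |] //; rewrite !lee_fin => up lo.
have m0 : 0 < m by exact: lt_le_trans (expR_gt0 _) lo.
exists m => //; split => //.
rewrite -(lnK m0) !ler_expR in lo up.
have kpos : (0 : R) <= k%:R by exact: ler0n.
have := ler_wpM2r kpos (ler_norm D); have := mulr_ge0 (ltW C10) kpos.
have := mulr_ge0 (normr_ge0 D) kpos.
rewrite ler_norml mulrDl; lra.
Qed.

End small_ball.

End inverse_moments.

Theorem lemma2p4 (d : measure_display) (T : measurableType d) (R : realType)
    (P : probability T R) (H gamma theta C1 C2 : R)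
    (B : T -> R -> R) (N : (R -> R) -> R) :
  0 < H < 1 ->
  is_fBM P H B ->
  0 < gamma < H ->
  (forall w, hoelder0 gamma (B w)) ->
  is_norm_on_hoelder0 gamma N ->
  measurable_fun setT (fun w => N (B w)) ->
  0 < theta -> 0 < C1 -> 0 < C2 ->
  (forall eps : R, 0 < eps <= 1 ->
     - C1 * eps `^ (- theta) <= ln (fine (P [set w | N (B w) <= eps]))
     /\ ln (fine (P [set w | N (B w) <= eps])) <= - C2 * eps `^ (- theta)) ->
  exists r : nat -> R,
    (fun k : nat => r k / k%:R) @ \oo --> (0 : R) /\
    \forall k \near \oo,
      eta_moment P N B k = ((k%:R) `^ (k%:R / theta + r k))%:E.
Proof.
move=> _ _ _ hoelderB normN mX theta0 C10 C20 small_ball.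
have N0 w : 0 <= N (B w) by case: normN => _ N_ge0 _ _ _; exact/N_ge0/hoelderB.
have [K bound] := @ln_invXn_moment_bound d T R P _ mX N0 theta C1 C2 theta0 C10 C20 small_ball.
pose g k := ln (fine (eta_moment P N B k)) - k%:R / theta * ln k%:R.
exists (fun k => g k / ln k%:R); split.
  apply: (@cvg_div_ln_div0 _ K); near=> k.
  have k0 : (0 < k)%N by near: k; exists 1%N.
  by rewrite /g /eta_moment; have [m -> [_ gk]] := bound k k0.
near=> k.
have k0 : (0 < k)%N by near: k; exists 1%N.
have [m eta_m [m0 _]] := bound k k0.
have k1 : (1 : R) < k%:R by near: k; exact: nbhs_infty_gtr.
rewrite /eta_moment eta_m; congr EFin.
rewrite /powR gt_eqF ?(lt_trans ltr01) // -{1}(lnK m0) /g /eta_moment eta_m /=.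
by congr expR; field; rewrite !gt_eqF ?ln_gt0.
Unshelve. all: by end_near.
Qed.
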